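(* Let $d\in\mathbb{N}$, $K\in\mathbb{N}$, $K\ge 1$, let $\mathcal{G}$, $n$, $\nabla$, $\triangle_K$ be as in the context, let $f\colon\mathcal{G}\to\mathbb{R}$ be given, and let $\lambda_1,\dots,\lambda_K>0$, $\gamma>0$. Then the functional $$E(u,c,l)=\sum_{k=1}^K\sum_{j\in\mathcal{G}}u_k(j)\,|f(j)-l(j)-c_k|^2+\sum_{k=1}^K\lambda_k\,\big\|\,|\nabla u_k|\,\big\|_1+\gamma\|\nabla l\|_2^2+\iota_{\triangle_K^n}(u),$$ defined for $u=(u_k(j))_{j\in\mathcal{G},\,k=1,\dots,K}\in\mathbb{R}^{nK}$, $c=(c_1,\dots,c_K)\in\mathbb{R}^K$, $l\in\mathbb{R}^{\mathcal{G}}\cong\mathbb{R}^n$, attains its minimum, i.e. there exists $(u^*,c^*,l^* )$ with $E(u^*,c^*,l^* )=\inf_{(u,c,l)}E(u,c,l)<\infty$.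
   Context: $\mathcal{G}=\{1,\dots,n_1\}\times\dots\times\{1,\dots,n_d\}$ is a $d$-dimensional image grid with $n=n_1\cdots n_d$ pixels. For $v\colon\mathcal{G}\to\mathbb{R}$ the discrete gradient $\nabla v\colon\mathcal{G}\to\mathbb{R}^d$ uses forward differences with mirror boundary conditions: $(\nabla v)_i(j)=v(j+e_i)-v(j)$ if $j_i<n_i$ and $(\nabla v)_i(j)=0$ if $j_i=n_i$ ($e_i$ the $i$-th unit vector). $|\nabla v|(j)$ denotes the Euclidean norm of $(\nabla v)(j)\in\mathbb{R}^d$, $\|\cdot\|_1$ is the sum of absolute values over $j\in\mathcal{G}$, and $\|A\|_2$ denotes the square root of the sum of squares of all entries of an array $A$. $u_k=(u_k(j))_{j\in\mathcal{G}}$. $\triangle_K=\{v\in[0,1]^K:\sum_{k=1}^Kv_k=1\}$ is the probability simplex and $u\in\triangle_K^n$ means $(u_k(j))_{k=1}^K\in\triangle_K$ for every $j\in\mathcal{G}$. $\iota_S$ is the indicator function of a set $S$ ($0$ on $S$, $+\infty$ outside). *)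

From Stdlib Require Import Reals List ClassicalEpsilon.
Import ListNotations.
Open Scope R_scope.

(* Image grid with sizes ns = [n_1; ...; n_d] (d = length ns).
   Pixels are lists j = [j_1; ...; j_d] of 0-based indices, 0 <= j_i < n_i
   (the paper's index j_i corresponds to our j_i + 1). *)
Fixpoint grid (ns : list nat) : list (list nat) :=
  match ns with
  | [] => [[]]
  | m :: ns' => flat_map (fun a => map (cons a) (grid ns')) (seq 0 m)
  end.

Definition lsum {A : Type} (s : list A) (f : A -> R) : R :=
  fold_right (fun x acc => f x + acc) 0 s.

Fixpoint incr_at (i : nat) (j : list nat) : list nat :=
  match j, i with
  | [], _ => []
  | x :: t, O => S x :: t
  | x :: t, S i' => x :: incr_at i' t
  end.

(* forward difference in direction i with mirror boundary conditions *)
Definition grad_i (ns : list nat) (v : list nat -> R) (i : nat) (j : list nat) : R :=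
  if Nat.ltb (S (nth i j 0%nat)) (nth i ns 0%nat) then v (incr_at i j) - v j else 0.

Definition grad_sq (ns : list nat) (v : list nat -> R) (j : list nat) : R :=
  lsum (seq 0 (length ns)) (fun i => (grad_i ns v i j) ^ 2).

Definition TV (ns : list nat) (v : list nat -> R) : R :=
  lsum (grid ns) (fun j => sqrt (grad_sq ns v j)).

Definition grad_norm2_sq (ns : list nat) (v : list nat -> R) : R :=
  lsum (grid ns) (fun j => grad_sq ns v j).

(* u in Delta_K^n; labels k = 0..K-1 *)
Definition in_simplex_field (ns : list nat) (K : nat) (u : nat -> list nat -> R) : Prop :=
  forall j, In j (grid ns) ->
    (forall k, (k < K)%nat -> 0 <= u k j <= 1) /\
    lsum (seq 0 K) (fun k => u k j) = 1.

Inductive ERbar := Fin (r : R) | PInf.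

Definition ER_le (a b : ERbar) : Prop :=
  match a, b with
  | _, PInf => True
  | PInf, Fin _ => False
  | Fin x, Fin y => x <= y
  end.

Definition ER_add (a : ERbar) (b : ERbar) : ERbar :=
  match a, b with
  | Fin x, Fin y => Fin (x + y)
  | _, _ => PInf
  end.

Definition iota (P : Prop) : ERbar :=
  match excluded_middle_informative P with
  | left _ => Fin 0
  | right _ => PInf
  end.

Definition Efun (ns : list nat) (K : nat) (f : list nat -> R)
  (lam : nat -> R) (gamma : R)
  (u : nat -> list nat -> R) (c : nat -> R) (l : list nat -> R) : ERbar :=
  ER_add
    (Fin (lsum (seq 0 K) (fun k => lsum (grid ns) (fun j => u k j * (Rabs (f j - l j - c k)) ^ 2))
          + lsum (seq 0 K) (fun k => lam k * TV ns (u k))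
          + gamma * grad_norm2_sq ns l))
    (iota (in_simplex_field ns K u)).

(** The simplex constraint bounds u, so only c and l range over unbounded
    sets.  The energy is unchanged when a constant is added to every c_k and
    subtracted from l, so l may be normalised to vanish at the origin of the
    grid; on a sublevel set the term γ‖∇l‖² then bounds l, since every pixel
    is joined to the origin by a monotone path of at most Σ n_i steps.  With l
    bounded, clamping each c_k to an interval containing all values f - l only
    brings it closer to them, and clamping u to [0,1] is harmless and
    nonexpansive for the total variation.  Thus the infimum is attained on a
    compact box, where the continuous energy has a minimum. *)

From Stdlib Require Import Reals List Lra Lia ClassicalEpsilon.
Open Scope R_scope.

Section ListSum.
Context {A : Type}.

Lemma lsum_le (s : list A) f g :
  (forall x, In x s -> f x <= g x) -> lsum s f <= lsum s g.
Proof.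
induction s as [|a s IH]; intros H; simpl; [lra|].
apply Rplus_le_compat; [apply H; left; auto | apply IH; intros; apply H; right; auto].
Qed.

Lemma lsum_ext (s : list A) f g :
  (forall x, In x s -> f x = g x) -> lsum s f = lsum s g.
Proof.
induction s as [|a s IH]; intros H; simpl; [lra|].
rewrite H by (left; auto). rewrite IH; auto. intros; apply H; right; auto.
Qed.

Lemma lsum_nonneg (s : list A) f :
  (forall x, In x s -> 0 <= f x) -> 0 <= lsum s f.
Proof.
induction s as [|a s IH]; intros H; simpl; [lra|].
assert (0 <= f a) by (apply H; left; auto).
assert (0 <= lsum s f) by (apply IH; intros; apply H; right; auto). lra.
Qed.

Lemma lsum_ge_term (s : list A) f y :
  (forall x, In x s -> 0 <= f x) -> In y s -> f y <= lsum s f.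
Proof.
induction s as [|a s IH]; intros H Hy; simpl in *; [tauto|].
destruct Hy as [<-|Hy].
- assert (0 <= lsum s f) by (apply lsum_nonneg; auto). lra.
- assert (0 <= f a) by auto. assert (f y <= lsum s f) by auto. lra.
Qed.

Lemma lsum_const (s : list A) a : lsum s (fun _ => a) = INR (length s) * a.
Proof.
induction s; simpl; [lra|]. rewrite IHs. destruct (length s); simpl; lra.
Qed.

End ListSum.

Lemma in_grid_cons m ns a j :
  In (a :: j) (grid (m :: ns)) <-> (a < m)%nat /\ In j (grid ns).
Proof.
simpl. rewrite in_flat_map. split.
- intros [b [Hb Hj]]. apply in_seq in Hb. apply in_map_iff in Hj.
  destruct Hj as [t [Ht Ht']]. inversion Ht; subst. split; [lia|auto].
- intros [Ha Hj]. exists a. split; [apply in_seq; lia|]. apply in_map; auto.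
Qed.

Lemma in_grid_cons_inv m ns j : In j (grid (m :: ns)) ->
  exists a j', j = a :: j' /\ (a < m)%nat /\ In j' (grid ns).
Proof.
simpl. rewrite in_flat_map. intros [b [Hb Hj]]. apply in_seq in Hb.
apply in_map_iff in Hj. destruct Hj as [t [<- Ht']]. exists b, t. split; auto. split; auto; lia.
Qed.

Definition origin (ns : list nat) : list nat := repeat 0%nat (length ns).

Lemma origin_in_grid ns j : In j (grid ns) -> In (origin ns) (grid ns).
Proof.
unfold origin. revert j; induction ns as [|m ns IH]; intros j Hj; simpl in *; auto.
destruct (in_grid_cons_inv m ns j Hj) as [a [j' [-> [Ha Hj']]]].
apply in_grid_cons. split; [lia|]. eapply IH; eauto.
Qed.

Lemma list_sum_grid_le ns j : In j (grid ns) -> (list_sum j <= list_sum ns)%nat.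
Proof.
revert j; induction ns as [|m ns IH]; intros j Hj.
- simpl in Hj. destruct Hj as [<-|[]]. simpl; lia.
- destruct (in_grid_cons_inv m ns j Hj) as [a [j' [-> [Ha Hj']]]].
  simpl. specialize (IH j' Hj'). lia.
Qed.

(* Walk from (a :: j') first inside the slice {a} × grid ns to (a :: origin),
   then along the first axis down to the origin. *)
Lemma Rabs_sub_origin_le ns (v : list nat -> R) D : 0 <= D ->
  (forall i j, In j (grid ns) -> Rabs (grad_i ns v i j) <= D) ->
  forall j, In j (grid ns) -> Rabs (v j - v (origin ns)) <= INR (list_sum j) * D.
Proof.
unfold origin. revert v; induction ns as [|m ns IH]; intros v HD Hg j Hj.
- simpl in Hj. destruct Hj as [<-|[]]. simpl. rewrite Rminus_diag, Rabs_R0. lra.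
- destruct (in_grid_cons_inv m ns j Hj) as [a [j' [-> [Ha Hj']]]].
  simpl (repeat _ _). simpl (list_sum _).
  set (z := repeat 0%nat (length ns)).
  assert (Hslice : Rabs (v (a :: j') - v (a :: z)) <= INR (list_sum j') * D).
  { apply (IH (fun t => v (a :: t))); auto.
    intros i t Ht. apply (Hg (S i) (a :: t)). apply in_grid_cons; auto. }
  assert (Hz : In z (grid ns)) by (eapply origin_in_grid; eauto).
  assert (Haxis : forall b, (b <= a)%nat -> Rabs (v (b :: z) - v (0%nat :: z)) <= INR b * D).
  { induction b as [|b IHb]; intros Hb.
    - rewrite Rminus_diag, Rabs_R0. simpl; lra.
    - specialize (IHb ltac:(lia)).
      assert (Hgb := Hg 0%nat (b :: z) ltac:(apply in_grid_cons; split; [lia|auto])).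
      unfold grad_i in Hgb. simpl in Hgb.
      destruct (Nat.ltb (S b) m) eqn:E; [|apply Nat.ltb_ge in E; lia].
      rewrite S_INR.
      replace (v (S b :: z) - v (0%nat :: z))
        with ((v (S b :: z) - v (b :: z)) + (v (b :: z) - v (0%nat :: z))) by ring.
      eapply Rle_trans; [apply Rabs_triang|]. lra. }
  specialize (Haxis a ltac:(lia)).
  replace (v (a :: j') - v (0%nat :: z))
    with ((v (a :: j') - v (a :: z)) + (v (a :: z) - v (0%nat :: z))) by ring.
  eapply Rle_trans; [apply Rabs_triang|]. rewrite plus_INR. lra.
Qed.

Lemma grad_sq_nonneg ns w j : 0 <= grad_sq ns w j.
Proof. unfold grad_sq. apply lsum_nonneg. intros. apply pow2_ge_0. Qed.

Lemma TV_nonneg ns w : 0 <= TV ns w.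
Proof. unfold TV. apply lsum_nonneg. intros. apply sqrt_pos. Qed.

(* Directions i >= length ns contribute 0, since then nth i ns 0 = 0. *)
Lemma Rabs_grad_i_le ns w i j : In j (grid ns) ->
  Rabs (grad_i ns w i j) <= sqrt (grad_norm2_sq ns w).
Proof.
intros Hj.
assert (Hsq : (grad_i ns w i j) ^ 2 <= grad_norm2_sq ns w).
{ apply Rle_trans with (grad_sq ns w j).
  - destruct (Nat.lt_ge_cases i (length ns)) as [Hi|Hi].
    + unfold grad_sq. apply (lsum_ge_term _ (fun i => grad_i ns w i j ^ 2)).
      * intros; apply pow2_ge_0.
      * apply in_seq; lia.
    + unfold grad_i. rewrite (nth_overflow ns) by lia.
      destruct (Nat.ltb _ 0) eqn:E; [apply Nat.ltb_lt in E; lia|].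
      replace (0 ^ 2) with 0 by ring. apply grad_sq_nonneg.
  - unfold grad_norm2_sq. apply (lsum_ge_term _ (fun j => grad_sq ns w j)); auto.
    intros; apply grad_sq_nonneg. }
rewrite <- sqrt_Rsqr_abs. apply sqrt_le_1_alt. unfold Rsqr. simpl in Hsq. lra.
Qed.

Lemma Rabs_sub_origin_le_grad_norm ns l j : In j (grid ns) ->
  Rabs (l j - l (origin ns)) <= INR (list_sum ns) * sqrt (grad_norm2_sq ns l).
Proof.
intros Hj. eapply Rle_trans.
- apply (Rabs_sub_origin_le ns l); auto. apply sqrt_pos.
  intros i t Ht. apply Rabs_grad_i_le; auto.
- apply Rmult_le_compat_r; [apply sqrt_pos|]. apply le_INR, list_sum_grid_le; auto.
Qed.

Definition nonexpansive (phi : R -> R) : Prop :=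
  forall x y, Rabs (phi x - phi y) <= Rabs (x - y).

Lemma sq_le_of_Rabs_le x y : Rabs x <= Rabs y -> x ^ 2 <= y ^ 2.
Proof. intros H. rewrite <- (pow2_abs y). apply pow_maj_Rabs, H. Qed.

Lemma grad_sq_nonexpansive ns w phi j : nonexpansive phi ->
  grad_sq ns (fun t => phi (w t)) j <= grad_sq ns w j.
Proof.
intros Hphi. unfold grad_sq. apply lsum_le. intros i _.
apply sq_le_of_Rabs_le. unfold grad_i. destruct Nat.ltb; [apply Hphi|lra].
Qed.

Lemma TV_nonexpansive ns w phi : nonexpansive phi ->
  TV ns (fun t => phi (w t)) <= TV ns w.
Proof.
intros Hphi. unfold TV. apply lsum_le. intros j _. apply sqrt_le_1_alt.
apply grad_sq_nonexpansive; auto.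
Qed.

Lemma grad_norm2_sq_nonexpansive ns w phi : nonexpansive phi ->
  grad_norm2_sq ns (fun t => phi (w t)) <= grad_norm2_sq ns w.
Proof.
intros Hphi. unfold grad_norm2_sq. apply lsum_le. intros j _.
apply grad_sq_nonexpansive; auto.
Qed.

Lemma grad_norm2_sq_shift ns w a :
  grad_norm2_sq ns (fun t => w t - a) = grad_norm2_sq ns w.
Proof.
unfold grad_norm2_sq, grad_sq. apply lsum_ext. intros j _. apply lsum_ext. intros i _.
unfold grad_i. destruct Nat.ltb; [f_equal; ring|reflexivity].
Qed.

Definition clamp (a b x : R) : R := Rmax a (Rmin b x).

Lemma clamp_id a b x : a <= x <= b -> clamp a b x = x.
Proof. intros. unfold clamp, Rmax, Rmin. repeat destruct Rle_dec; lra. Qed.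

Lemma clamp_range a b x : a <= b -> a <= clamp a b x <= b.
Proof. intros. unfold clamp, Rmax, Rmin. repeat destruct Rle_dec; lra. Qed.

Lemma clamp_nonexpansive a b : a <= b -> nonexpansive (clamp a b).
Proof.
intros ? x y. unfold clamp, Rmax, Rmin.
repeat destruct Rle_dec; unfold Rabs; repeat destruct Rcase_abs; lra.
Qed.

Lemma Rabs_sub_clamp_le a b x z : a <= z <= b -> Rabs (z - clamp a b x) <= Rabs (z - x).
Proof.
intros. unfold clamp, Rmax, Rmin.
repeat destruct Rle_dec; unfold Rabs; repeat destruct Rcase_abs; lra.
Qed.

Lemma Rabs_le_between x a : Rabs x <= a -> - a <= x <= a.
Proof. unfold Rabs; destruct Rcase_abs; lra. Qed.

Lemma iota_true {P : Prop} : P -> iota P = Fin 0.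
Proof. intros H. unfold iota. destruct excluded_middle_informative; tauto. Qed.

Lemma iota_false {P : Prop} : ~ P -> iota P = PInf.
Proof. intros H. unfold iota. destruct excluded_middle_informative; tauto. Qed.

Section Energy.
Variables (ns : list nat) (K : nat) (f : list nat -> R) (lam : nat -> R) (gamma : R).
Hypothesis lam_ge0 : forall k, (k < K)%nat -> 0 <= lam k.
Hypothesis gamma_gt0 : 0 < gamma.

Definition data_term (u : nat -> list nat -> R) (c : nat -> R) (l : list nat -> R) : R :=
  lsum (seq 0 K) (fun k => lsum (grid ns) (fun j => u k j * (Rabs (f j - l j - c k)) ^ 2)).

Definition TV_term (u : nat -> list nat -> R) : R :=
  lsum (seq 0 K) (fun k => lam k * TV ns (u k)).

Definition energy u c l : R := data_term u c l + TV_term u + gamma * grad_norm2_sq ns l.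

Lemma Efun_energy u c l :
  Efun ns K f lam gamma u c l = ER_add (Fin (energy u c l)) (iota (in_simplex_field ns K u)).
Proof. reflexivity. Qed.

Lemma data_term_nonneg u c l : in_simplex_field ns K u -> 0 <= data_term u c l.
Proof.
intros Hu. apply lsum_nonneg. intros k Hk. apply in_seq in Hk.
apply lsum_nonneg. intros j Hj. destruct (Hu j Hj) as [Hb _].
specialize (Hb k ltac:(lia)). apply Rmult_le_pos; [lra|apply pow2_ge_0].
Qed.

Lemma TV_term_nonneg u : 0 <= TV_term u.
Proof.
apply lsum_nonneg. intros k Hk. apply in_seq in Hk.
apply Rmult_le_pos; [apply lam_ge0; lia|apply TV_nonneg].
Qed.

Lemma regulariser_le_energy u c l : in_simplex_field ns K u ->
  gamma * grad_norm2_sq ns l <= energy u c l.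
Proof.
intros Hu. pose proof (data_term_nonneg u c l Hu). pose proof (TV_term_nonneg u).
unfold energy. lra.
Qed.

Lemma energy_shift u c l a :
  energy u (fun k => c k + a) (fun j => l j - a) = energy u c l.
Proof.
unfold energy. rewrite grad_norm2_sq_shift. f_equal. f_equal.
apply lsum_ext. intros k _. apply lsum_ext. intros j _.
replace (f j - (l j - a) - (c k + a)) with (f j - l j - c k) by ring. reflexivity.
Qed.

(* Each [c k] is moved towards the interval [-Cb, Cb], which contains all
   values [f j - l j]. *)
Lemma energy_clamp_le u c l Lb Cb : in_simplex_field ns K u -> 0 <= Lb ->
  (forall j, In j (grid ns) -> Rabs (l j) <= Lb) ->
  (forall j, In j (grid ns) -> Rabs (f j) + Lb <= Cb) ->
  energy (fun k j => clamp 0 1 (u k j)) (fun k => clamp (- Cb) Cb (c k))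
    (fun j => clamp (- Lb) Lb (l j)) <= energy u c l.
Proof.
intros Hu HLb Hl Hf.
unfold energy. apply Rplus_le_compat; [apply Rplus_le_compat|].
- apply lsum_le. intros k Hk. apply in_seq in Hk. apply lsum_le. intros j Hj.
  destruct (Hu j Hj) as [Hb _]. specialize (Hb k ltac:(lia)).
  rewrite (clamp_id 0 1 (u k j)) by lra.
  rewrite (clamp_id (- Lb) Lb) by (apply Rabs_le_between; auto).
  apply Rmult_le_compat_l; [lra|]. apply sq_le_of_Rabs_le. rewrite !Rabs_Rabsolu.
  apply Rabs_sub_clamp_le, Rabs_le_between.
  eapply Rle_trans; [apply Rabs_triang|]. rewrite Rabs_Ropp.
  specialize (Hl j Hj). specialize (Hf j Hj). lra.
- apply lsum_le. intros k Hk. apply in_seq in Hk.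
  apply Rmult_le_compat_l; [apply lam_ge0; lia|].
  apply TV_nonexpansive, clamp_nonexpansive. lra.
- apply Rmult_le_compat_l; [lra|].
  apply grad_norm2_sq_nonexpansive, clamp_nonexpansive. lra.
Qed.

Definition radius_l (E0 : R) : R := INR (list_sum ns) * sqrt (E0 / gamma).

Definition radius_c (E0 : R) : R := lsum (grid ns) (fun j => Rabs (f j)) + radius_l E0.

Lemma radius_l_nonneg E0 : 0 <= radius_l E0.
Proof. apply Rmult_le_pos; [apply pos_INR|apply sqrt_pos]. Qed.

Lemma Rabs_sub_origin_le_radius u c l E0 j :
  in_simplex_field ns K u -> energy u c l <= E0 -> In j (grid ns) ->
  Rabs (l j - l (origin ns)) <= radius_l E0.
Proof.
intros Hu HE Hj. eapply Rle_trans; [apply Rabs_sub_origin_le_grad_norm; auto|].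
apply Rmult_le_compat_l; [apply pos_INR|]. apply sqrt_le_1_alt.
pose proof (regulariser_le_energy u c l Hu).
apply Rmult_le_reg_l with gamma; auto. field_simplify; lra.
Qed.

Lemma clamp_in_simplex u : in_simplex_field ns K u ->
  in_simplex_field ns K (fun k j => clamp 0 1 (u k j)).
Proof.
intros Hu j Hj. destruct (Hu j Hj) as [Hb Hsum]. split.
- intros k _. apply clamp_range. lra.
- transitivity (lsum (seq 0 K) (fun k => u k j)); [|exact Hsum].
  apply lsum_ext. intros k Hk. apply in_seq in Hk. apply clamp_id, Hb. lia.
Qed.

(* The normalisation l (origin ns) = 0 is obtained by [energy_shift]. *)
Lemma energy_sublevel_in_box u c l E0 :
  in_simplex_field ns K u -> energy u c l <= E0 ->
  exists (u' : nat -> list nat -> R) (c' : nat -> R) (l' : list nat -> R),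
    in_simplex_field ns K u' /\ (forall k j, 0 <= u' k j <= 1) /\
    (forall k, - radius_c E0 <= c' k <= radius_c E0) /\
    (forall j, - radius_l E0 <= l' j <= radius_l E0) /\
    energy u' c' l' <= energy u c l.
Proof.
intros Hu HE. set (l0 := l (origin ns)). pose proof (radius_l_nonneg E0).
exists (fun k j => clamp 0 1 (u k j)),
  (fun k => clamp (- radius_c E0) (radius_c E0) (c k + l0)),
  (fun j => clamp (- radius_l E0) (radius_l E0) (l j - l0)).
assert (Hc : 0 <= radius_c E0).
{ unfold radius_c. pose proof (lsum_nonneg (grid ns) _ (fun j _ => Rabs_pos (f j))). lra. }
split; [apply clamp_in_simplex; auto|].
split; [intros; apply clamp_range; lra|].
split; [intros; apply clamp_range; lra|].
split; [intros; apply clamp_range; lra|].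
rewrite <- (energy_shift u c l l0).
apply energy_clamp_le; auto.
- intros j Hj. eapply Rabs_sub_origin_le_radius; eauto.
- intros j Hj. unfold radius_c.
  pose proof (lsum_ge_term (grid ns) (fun j => Rabs (f j)) j (fun x _ => Rabs_pos (f x)) Hj).
  lra.
Qed.

End Energy.

Lemma uniform_in_simplex ns K : (1 <= K)%nat ->
  in_simplex_field ns K (fun _ _ => / INR K).
Proof.
intros HK j _. assert (0 < INR K) by (apply lt_0_INR; lia). split.
- intros k _. split; [apply Rlt_le, Rinv_0_lt_compat; auto|].
  rewrite <- Rinv_1. apply Rinv_le_contravar; [lra|]. apply (le_INR 1); lia.
- rewrite lsum_const, length_seq. field. lra.
Qed.

From HB Require Import structures.
From mathcomp Require Import all_boot all_order all_algebra.
From mathcomp Require Import all_classical all_reals all_analysis.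
From mathcomp Require Import Rstruct Rstruct_topology.
Import Order.TTheory GRing.Theory Num.Theory.
Import ArrowAsProduct.
Local Open Scope classical_set_scope.

Section RealContinuity.
Context {T : topologicalType}.

Lemma continuous_Rplus (f g : T -> R) :
  continuous f -> continuous g -> continuous (fun x => Rplus (f x) (g x)).
Proof. by move=> cf cg x; apply: (@continuousD R R^o T f g x (cf x) (cg x)). Qed.

Lemma continuous_Rmult (f g : T -> R) :
  continuous f -> continuous g -> continuous (fun x => Rmult (f x) (g x)).
Proof. by move=> cf cg x; apply: (@continuousM R T f g x (cf x) (cg x)). Qed.

Lemma continuous_Rminus (f g : T -> R) :
  continuous f -> continuous g -> continuous (fun x => Rminus (f x) (g x)).
Proof.
by move=> cf cg; apply: continuous_Rplus => // x; apply: (@continuousN R R^o T _ x (cg x)).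
Qed.

Lemma continuous_pow (f : T -> R) (n : nat) :
  continuous f -> continuous (fun x => pow (f x) n).
Proof.
move=> cf; elim: n => [|n IH] /=; first by move=> x; apply: cst_continuous.
exact: continuous_Rmult.
Qed.

Lemma continuous_Rsqrt (f : T -> R) : continuous f -> continuous (fun x => sqrt (f x)).
Proof.
move=> cf; have -> : (fun x => sqrt (f x)) = (fun x => Num.sqrt (f x)).
  by apply: funext => y; rewrite RsqrtE.
by move=> x; apply: continuous_comp; [exact: cf | exact: sqrt_continuous].
Qed.

Lemma continuous_Rabs (f : T -> R) : continuous f -> continuous (fun x => Rabs (f x)).
Proof.
by move=> cf x; apply: continuous_comp; [exact: cf | exact: (@norm_continuous _ R^o)].
Qed.

Lemma continuous_lsum {A : Type} (s : list A) (F : A -> T -> R) :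
  (forall a, continuous (F a)) -> continuous (fun x => lsum s (fun a => F a x)).
Proof.
move=> cF; elim: s => [|a s IH] /=; first by move=> x; apply: cst_continuous.
exact: continuous_Rplus.
Qed.

Section Regularisers.
Variables (ns : list nat) (w : T -> list nat -> R).
Hypothesis cw : forall t, continuous (fun x => w x t).

Lemma continuous_grad_sq j : continuous (fun x => grad_sq ns (w x) j).
Proof.
rewrite /grad_sq; apply: (continuous_lsum _ (fun i x => pow (grad_i ns (w x) i j) 2)) => i.
apply: continuous_pow; rewrite /grad_i; case: (Nat.ltb _ _).
  exact: continuous_Rminus.
by move=> x; apply: cst_continuous.
Qed.

Lemma continuous_TV : continuous (fun x => TV ns (w x)).
Proof.
rewrite /TV; apply: (continuous_lsum _ (fun j x => sqrt (grad_sq ns (w x) j))) => j.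
exact/continuous_Rsqrt/continuous_grad_sq.
Qed.

Lemma continuous_grad_norm2_sq : continuous (fun x => grad_norm2_sq ns (w x)).
Proof.
rewrite /grad_norm2_sq.
exact: (continuous_lsum _ (fun j x => grad_sq ns (w x) j)) continuous_grad_sq.
Qed.

End Regularisers.
End RealContinuity.

Definition box {I : Type} (lo hi : I -> R) : set (I -> R) :=
  [set p | forall i, Rle (lo i) (p i) /\ Rle (p i) (hi i)].

Lemma box_compact (I : eqType) (lo hi : I -> R) : compact (box lo hi).
Proof.
have -> : box lo hi = [set p : I -> R | forall i, `[lo i, hi i]%classic (p i)].
  apply/seteqP; split => p /= Hp i; have := Hp i.
    by case=> /RleP a /RleP b; rewrite /= in_itv /= a b.
  by rewrite /= in_itv /= => /andP[/RleP a /RleP b].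
exact: (tychonoff (fun i => @segment_compact R (lo i) (hi i))).
Qed.

Lemma closed_level_family {T : topologicalType} {J : Type} (D : set J)
    (h : J -> T -> R) (a : R) :
  (forall j, continuous (h j)) -> closed [set p | forall j, D j -> h j p = a].
Proof.
move=> ch.
have -> : [set p | forall j, D j -> h j p = a] = \bigcap_(j in D) (h j @^-1` [set a]).
  by apply/seteqP; split => p /= H j Dj; apply: H.
apply: closed_bigI => j _; apply: preimage_closed; first by move=> x _; apply: ch.
exact: closed_eq.
Qed.

Definition coord : Type := ((nat * list nat) + nat) + list nat.

Definition coord_u (p : coord -> R) : nat -> list nat -> R := fun k j => p (inl (inl (k, j))).
Definition coord_c (p : coord -> R) : nat -> R := fun k => p (inl (inr k)).
Definition coord_l (p : coord -> R) : list nat -> R := fun j => p (inr j).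

Definition pack (u : nat -> list nat -> R) (c : nat -> R) (l : list nat -> R) : coord -> R :=
  fun i => match i with inl (inl (k, j)) => u k j | inl (inr k) => c k | inr j => l j end.

Definition box_lo (Lb Cb : R) (i : coord) : R :=
  match i with inl (inl _) => 0 | inl (inr _) => - Cb | inr _ => - Lb end.
Definition box_hi (Lb Cb : R) (i : coord) : R :=
  match i with inl (inl _) => 1 | inl (inr _) => Cb | inr _ => Lb end.

Section CoordEnergy.
Variables (ns : list nat) (K : nat) (f : list nat -> R) (lam : nat -> R) (gamma : R).

Definition coord_energy (p : coord -> R) : R :=
  energy ns K f lam gamma (coord_u p) (coord_c p) (coord_l p).

(* The constraints 0 <= u <= 1 are left to the box, so that this set is a
   level set of continuous functions. *)
Definition unit_sum_set : set (coord -> R) :=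
  [set p | forall j, In j (grid ns) -> lsum (List.seq 0 K) (fun k => coord_u p k j) = 1].

Lemma closed_unit_sum_set : closed unit_sum_set.
Proof.
apply: (closed_level_family _ (fun j p => lsum (List.seq 0 K) (fun k => coord_u p k j))) => j.
by apply: (continuous_lsum _ (fun k p => coord_u p k j)) => k; apply: proj_continuous.
Qed.

Lemma continuous_coord_energy : continuous coord_energy.
Proof.
have cu k t : continuous (fun p : coord -> R => coord_u p k t) by apply: proj_continuous.
have cl t : continuous (fun p : coord -> R => coord_l p t) by apply: proj_continuous.
rewrite /coord_energy /energy /data_term /TV_term.
apply: continuous_Rplus; first apply: continuous_Rplus.
- apply: (continuous_lsum _ (fun k p => lsum (grid ns)
    (fun j => coord_u p k j * (Rabs (f j - coord_l p j - coord_c p k)) ^ 2))) => k.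
  apply: (continuous_lsum _ (fun j p =>
    coord_u p k j * (Rabs (f j - coord_l p j - coord_c p k)) ^ 2)) => j.
  apply: continuous_Rmult => //; apply/continuous_pow/continuous_Rabs.
  apply: continuous_Rminus; last exact: proj_continuous.
  by apply: continuous_Rminus => // p; apply: cst_continuous.
- apply: (continuous_lsum _ (fun k p => lam k * TV ns (coord_u p k))) => k.
  by apply: continuous_Rmult; [move=> p; apply: cst_continuous | apply: continuous_TV].
- apply: continuous_Rmult; first by move=> p; apply: cst_continuous.
  exact: continuous_grad_norm2_sq.
Qed.

Definition feasible_box (E0 : R) : set (coord -> R) :=
  box (box_lo (radius_l ns gamma E0) (radius_c ns f gamma E0))
      (box_hi (radius_l ns gamma E0) (radius_c ns f gamma E0)) `&` unit_sum_set.

Lemma compact_feasible_box E0 : compact (feasible_box E0).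
Proof. exact/compact_closedI/closed_unit_sum_set/box_compact. Qed.

Lemma in_simplex_of_feasible_box E0 p :
  feasible_box E0 p -> in_simplex_field ns K (coord_u p).
Proof.
by move=> [Bp Sp] j Hj; split; [move=> k _; apply: (Bp (inl (inl (k, j)))) | apply: Sp].
Qed.

Hypothesis lam_gt0 : forall k, (k < K)%coq_nat -> 0 < lam k.
Hypothesis gamma_gt0 : 0 < gamma.

Lemma sublevel_point_in_box {u c l E0} :
  in_simplex_field ns K u -> energy ns K f lam gamma u c l <= E0 ->
  exists2 p, feasible_box E0 p & coord_energy p <= energy ns K f lam gamma u c l.
Proof.
move=> Hu HE.
have lam_ge0 k (Hk : (k < K)%coq_nat) : 0 <= lam k by apply: Rlt_le; apply: lam_gt0.
have [u' [c' [l' [Hu' [Bu [Bc [Bl Hle]]]]]]] :=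
  energy_sublevel_in_box _ _ _ _ _ lam_ge0 gamma_gt0 _ _ _ _ Hu HE.
exists (pack u' c' l') => //; split; last by move=> j Hj; case: (Hu' j Hj).
by case=> [[[k j]|k]|j] /=.
Qed.

Lemma energy_has_min_on_simplex : (1 <= K)%coq_nat ->
  exists u c l, in_simplex_field ns K u /\
    forall u' c' l', in_simplex_field ns K u' ->
      energy ns K f lam gamma u c l <= energy ns K f lam gamma u' c' l'.
Proof.
move=> HK.
pose E0 := energy ns K f lam gamma (fun _ _ => / INR K) (fun _ => 0) (fun _ => 0).
have [p0 Sp0 Hp0] := sublevel_point_in_box (uniform_in_simplex ns _ HK) (Rle_refl E0).
have [p /set_mem Sp minp] := compact_EVT_min (ex_intro _ p0 Sp0) (compact_feasible_box E0)
  (continuous_subspaceT continuous_coord_energy).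
have Hmin q : feasible_box E0 q -> coord_energy p <= coord_energy q.
  by move=> Sq; apply/RleP/minp/mem_set.
exists (coord_u p), (coord_c p), (coord_l p).
split; first exact: in_simplex_of_feasible_box Sp.
move=> u c l Hu; case: (Rle_lt_dec (energy ns K f lam gamma u c l) E0) => HE.
- have [q Sq Hq] := sublevel_point_in_box Hu HE.
  exact: Rle_trans (Hmin q Sq) Hq.
- apply: Rlt_le; apply: Rle_lt_trans HE.
  exact: Rle_trans (Hmin p0 Sp0) Hp0.
Qed.

End CoordEnergy.

Theorem mainTheorem1 (ns : list nat) (K : nat) (HK : (1 <= K)%coq_nat)
  (f : list nat -> R) (lam : nat -> R) (gamma : R)
  (Hlam : forall k, (k < K)%coq_nat -> 0 < lam k) (Hgamma : 0 < gamma) :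
  exists (us : nat -> list nat -> R) (cs : nat -> R) (ls : list nat -> R),
    Efun ns K f lam gamma us cs ls <> PInf /\
    forall (u : nat -> list nat -> R) (c : nat -> R) (l : list nat -> R),
      ER_le (Efun ns K f lam gamma us cs ls) (Efun ns K f lam gamma u c l).
Proof.
have [us [cs [ls [Hs Hmin]]]] := energy_has_min_on_simplex ns K f lam gamma Hlam Hgamma HK.
exists us, cs, ls; rewrite Efun_energy (iota_true Hs); split=> // u c l.
rewrite Efun_energy.
case: (Classical_Prop.classic (in_simplex_field ns K u)) => Hu; last by rewrite iota_false.
rewrite (iota_true Hu) /=; have := Hmin u c l Hu; lra.
Qed.
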